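(* Let $\mathcal M=\langle M,<,+,\{x\mapsto\lambda x\}_{\lambda\in\Lambda}\rangle$ be an ordered vector space over an ordered division ring $\Lambda$. Then every linear cell $C\subseteq M^n$ can be partitioned into finitely many product cells.
   Context: Let $\pi:M^n\to M^{n-1}$ be the projection onto the first $n-1$ coordinates; for $x\in M^n$ and $N\in M_{\ge0}$, $B_N(x)=x+[-N,N]^n$. A linear map on $X\subseteq M^n$ is one of the form $x\mapsto\lambda_1x_1+\dots+\lambda_nx_n+a$ ($\lambda_i\in\Lambda$, $a\in M$); $L(X)$ is the set of such maps and $L_\infty(X)=L(X)\cup\{\pm\infty\}$. Linear cells: $M^0$ is the linear cell in $M^0$; a linear cell in $M^{k+1}$ is either the graph $\Gamma(\alpha)$ of some $\alpha\in L(X)$ or a cylinder $(\alpha,\beta)=\{(x,y):x\in X,\alpha(x)<y<\beta(x)\}$ with $\alpha,\beta\in L_\infty(X)$, $\alpha<\beta$ on $X$, where $X\subseteq M^k$ is a linear cell. Purely unbounded sets $C\subseteq M^n$ (recursively): $C=M^0$ if $n=0$; for $n>0$, either $C$ is the graph of a function on $\pi(C)$ and $\pi(C)$ is purely unbounded, or $C$ is not such a graph, $\pi(C)$ is purely unbounded, and for every $N\in M_{\ge0}$ there is $x\in C$ with $C_{\pi(x)}\not\subseteq B_N(x_n)$, where $C_{\pi(x)}=\{t:(\pi(x),t)\in C\}$. A product cell is a linear cell $C$ of the form $C=J+D$ where $J$ is a purely unbounded linear cell, $D$ is a bounded linear cell, and every $c\in C$ can be written uniquely as $c=g+d$ with $g\in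 J$, $d\in D$. *)

From HB Require Import structures.
From mathcomp Require Import all_boot all_order all_algebra.
Set Implicit Arguments. Unset Strict Implicit. Unset Printing Implicit Defensive.
Import GRing.Theory.
Local Open Scope ring_scope.

Definition strict_total_order (T : Type) (lt : T -> T -> Prop) : Prop :=
  (forall x, ~ lt x x) /\
  (forall x y z, lt x y -> lt y z -> lt x z) /\
  (forall x y, lt x y \/ x = y \/ lt y x).

(** An ordered division ring: a (possibly non-commutative) nontrivial ring
    with a strict total order compatible with + and *, in which every nonzero
    element is invertible. *)
Definition ordered_division_ring (R : nzRingType) (lt : R -> R -> Prop) : Prop :=
  strict_total_order lt /\
  (forall x y z, lt x y -> lt (x + z) (y + z)) /\
  (forall x y, lt 0 x -> lt 0 y -> lt 0 (x * y)) /\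
  (forall x : R, x != 0 -> exists y, x * y = 1 /\ y * x = 1).

Definition ordered_vector_space (R : nzRingType) (ltR : R -> R -> Prop)
    (M : lmodType R) (lt : M -> M -> Prop) : Prop :=
  strict_total_order lt /\
  (forall x y z, lt x y -> lt (x + z) (y + z)) /\
  (forall (l : R) (x y : M), ltR 0 l -> lt x y -> lt (l *: x) (l *: y)).

Section Cells.
Variables (R : nzRingType) (M : lmodType R) (lt : M -> M -> Prop).

Definition le (x y : M) : Prop := lt x y \/ x = y.

Definition pt (n : nat) : Type := 'I_n -> M.

Definition proj (k : nat) (x : pt k.+1) : pt k :=
  fun j => x (widen_ord (leqnSn k) j).
Definition lastc (k : nat) (x : pt k.+1) : M := x ord_max.
Definition ext_pt (k : nat) (y : pt k) (t : M) : pt k.+1 :=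
  fun i => if unlift ord_max i is Some j then y j else t.

Record linmap (k : nat) := LinMap { lcoef : 'I_k -> R ; lconst : M }.
Definition leval (k : nat) (a : linmap k) (x : pt k) : M :=
  \sum_(i < k) lcoef a i *: x i + lconst a.

Inductive extmap (k : nat) := NegInf | Fin of linmap k | PosInf.
Inductive extM := MNeg | MFin of M | MPos.
Definition ext_lt (a b : extM) : Prop :=
  match a, b with
  | MNeg, MNeg => False
  | MNeg, _ => True
  | MFin x, MFin y => lt x y
  | MFin _, MPos => True
  | _, _ => False
  end.
Definition eeval (k : nat) (a : extmap k) (x : pt k) : extM :=
  match a with NegInf => MNeg | Fin f => MFin (leval f x) | PosInf => MPos end.

(** Linear cells (sets are predicates, described up to extensional equality). *)
Inductive linear_cell : forall n, (pt n -> Prop) -> Prop :=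
  | lc0 (C : pt 0 -> Prop) : (forall x, C x) -> linear_cell C
  | lc_graph (k : nat) (X : pt k -> Prop) (a : linmap k) (C : pt k.+1 -> Prop) :
      linear_cell X ->
      (forall x, C x <-> X (proj x) /\ lastc x = leval a (proj x)) ->
      linear_cell C
  | lc_cyl (k : nat) (X : pt k -> Prop) (a b : extmap k) (C : pt k.+1 -> Prop) :
      linear_cell X ->
      (forall y, X y -> ext_lt (eeval a y) (eeval b y)) ->
      (forall x, C x <-> X (proj x) /\ ext_lt (eeval a (proj x)) (MFin (lastc x))
                                    /\ ext_lt (MFin (lastc x)) (eeval b (proj x))) ->
      linear_cell C.

Definition proj_set (k : nat) (C : pt k.+1 -> Prop) : pt k -> Prop :=
  fun y => exists x, C x /\ (forall j, proj x j = y j).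

Definition is_graph_set (k : nat) (C : pt k.+1 -> Prop) : Prop :=
  forall x x', C x -> C x' -> (forall j, proj x j = proj x' j) -> lastc x = lastc x'.

Fixpoint purely_unbounded (n : nat) : (pt n -> Prop) -> Prop :=
  match n with
  | 0 => fun C => forall x, C x
  | k.+1 => fun C =>
      (is_graph_set C /\ purely_unbounded (proj_set C)) \/
      (~ is_graph_set C /\ purely_unbounded (proj_set C) /\
       forall N, le 0 N -> exists x, C x /\
         exists t, C (ext_pt (proj x) t) /\
                   ~ (le (lastc x - N) t /\ le t (lastc x + N)))
  end.

Definition bounded_set (n : nat) (D : pt n -> Prop) : Prop :=
  exists N, le 0 N /\ forall d, D d -> forall i, le (- N) (d i) /\ le (d i) N.

Definition product_cell (n : nat) (C : pt n -> Prop) : Prop :=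
  linear_cell C /\
  exists (J D : pt n -> Prop),
    linear_cell J /\ purely_unbounded J /\
    linear_cell D /\ bounded_set D /\
    (forall c, C c <-> exists g d, J g /\ D d /\ forall i, c i = g i + d i) /\
    (forall g g' d d', J g -> J g' -> D d -> D d' ->
       (forall i, g i + d i = g' i + d' i) ->
       (forall i, g i = g' i) /\ (forall i, d i = d' i)).

End Cells.

From Pilot Require Import Defs.
From mathcomp Require Import all_boot all_order all_algebra.
From Stdlib Require Import Classical FunctionalExtensionality PropExtensionality.
Set Implicit Arguments. Unset Strict Implicit. Unset Printing Implicit Defensive.
Import GRing.Theory.
Local Open Scope ring_scope.

(** We prove a stronger statement by induction along the construction of the
    cell: every linear cell is partitioned into strong product cells, i.e.
    product cells [Y = J + D] whose projection [P : Y -> J] is affine.  Over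
    such a [Y] the graph of an affine map [al] is the graph of the linear part
    of [al] over [J] plus the graph of [al] over [D].  For a cylinder
    [(al, be)] the width splits as [be - al = W g + V d] with [W] linear on
    [J] and [V] affine on [D].  An affine map bounded on a purely unbounded
    cell is constant, so if [W] is bounded the cylinder is a graph over [J]
    plus a cylinder over [D].  Otherwise let [a0] be the supremum of [- V] on
    [D] (an affine map bounded above on a cell has a supremum).  A
    nonconstant affine map has no minimum on a cell, so [a0 < W] on [J], and
    cutting along [sig = al + V + a0] gives a graph over [J] plus a band over
    [D], the graph of [sig], and a band of width [W - a0] over [J] (purely
    unbounded since [W] is unbounded) plus a graph over [D].  Half-infinite
    cylinders are a half-infinite band over [J] plus a graph over [D]. *)

Section ProductCellPartition.
Variables (R : nzRingType) (ltR : R -> R -> Prop) (M : lmodType R) (lt : M -> M -> Prop).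
Hypothesis HR : ordered_division_ring ltR.
Hypothesis HM : ordered_vector_space ltR lt.

Local Notation leM := (Defs.le lt).
Local Notation pt := (pt M).
#[local] Arguments NegInf {R M k}.
#[local] Arguments PosInf {R M k}.
#[local] Arguments MNeg {R M}.
#[local] Arguments MPos {R M}.

Lemma ltxx x : ~ lt x x.
Proof. by case: HM => [[h _] _]. Qed.
Lemma lt_trans x y z : lt x y -> lt y z -> lt x z.
Proof. by case: HM => [[_ [h _]] _]; apply: h. Qed.
Lemma lt_total x y : lt x y \/ x = y \/ lt y x.
Proof. by case: HM => [[_ [_ h]] _]. Qed.
Lemma ltD2r x y z : lt x y -> lt (x + z) (y + z).
Proof. by case: HM => [_ [h _]]; apply: h. Qed.
Lemma ltZ r x y : ltR 0 r -> lt x y -> lt (r *: x) (r *: y).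
Proof. by case: HM => [_ [_ h]]; apply: h. Qed.
Lemma lt_asym x y : lt x y -> lt y x -> False.
Proof. by move=> a b; apply: (@ltxx x); apply: lt_trans a b. Qed.
Lemma ltD2l x y z : lt x y -> lt (z + x) (z + y).
Proof. by move=> h; rewrite ![z + _]addrC; apply: ltD2r. Qed.
Lemma ltD2lE x y z : lt (z + x) (z + y) -> lt x y.
Proof. by move=> h; have := ltD2l (- z) h; rewrite !addKr. Qed.
Lemma subr_gt0 x y : lt 0 (y - x) <-> lt x y.
Proof.
split=> h; first by have := ltD2r x h; rewrite add0r subrK.
by have := ltD2r (- x) h; rewrite subrr.
Qed.
Lemma ltN2 x y : lt x y -> lt (- y) (- x).
Proof.
move=> h; have := ltD2r (- x - y) h.
by rewrite addrA subrr add0r addrCA subrr addr0.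
Qed.
Lemma ltN2E x y : lt (- y) (- x) -> lt x y.
Proof. by move/ltN2; rewrite !opprK. Qed.
Lemma ltD a b c d : lt a b -> lt c d -> lt (a + c) (b + d).
Proof. by move=> h1 h2; apply: lt_trans (ltD2r c h1) (ltD2l b h2). Qed.
Lemma le_refl x : leM x x.
Proof. by right. Qed.
Lemma lt_le_trans x y z : lt x y -> leM y z -> lt x z.
Proof. by move=> h [h'|<-] //; apply: lt_trans h h'. Qed.
Lemma le_lt_trans x y z : leM x y -> lt y z -> lt x z.
Proof. by move=> [h|->] h' //; apply: lt_trans h h'. Qed.
Lemma le_trans x y z : leM x y -> leM y z -> leM x z.
Proof. by move=> [h|->] // h'; left; apply: lt_le_trans h h'. Qed.
Lemma ltW x y : lt x y -> leM x y.
Proof. by left. Qed.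
Lemma not_lt x y : ~ lt x y -> leM y x.
Proof. by move=> h; case: (lt_total x y) => [//|[->|h']]; [right|left]. Qed.
Lemma not_le x y : ~ leM x y -> lt y x.
Proof. by move=> h; case: (lt_total x y) => [h'|[e|//]]; case: h; [left|right]. Qed.
Lemma le_lt_false x y : leM x y -> lt y x -> False.
Proof. by move=> [h|->] h'; [apply: lt_asym h h'|apply: ltxx h']. Qed.
Lemma le_anti x y : leM x y -> leM y x -> x = y.
Proof. by move=> [h|//] [h'|//]; case: (lt_asym h h'). Qed.
Lemma leD a b c d : leM a b -> leM c d -> leM (a + c) (b + d).
Proof.
move=> [h1|<-] [h2|<-]; [left; apply: ltD|left; apply: ltD2r|left; apply: ltD2l|right] => //.
Qed.
Lemma addr_ge0 x y : leM 0 x -> leM 0 y -> leM 0 (x + y).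
Proof. by move=> hx hy; rewrite -(addr0 0); apply: leD. Qed.
Lemma leN2 x y : leM x y -> leM (- y) (- x).
Proof. by move=> [h|->]; [left; apply: ltN2|right]. Qed.
Lemma subr_ge0 x y : leM 0 (y - x) <-> leM x y.
Proof.
split=> [[h|h]|[h|->]]; first by left; apply/subr_gt0.
- by right; move/esym/eqP: h; rewrite subr_eq0 => /eqP.
- by left; apply/subr_gt0.
- by right; rewrite subrr.
Qed.
Lemma leZ r x y : ltR 0 r -> leM x y -> leM (r *: x) (r *: y).
Proof. by move=> hr [h|->]; [left; apply: ltZ|right]. Qed.
Lemma leDl u v : leM 0 v -> leM u (u + v).
Proof. by move=> h; have := leD (le_refl u) h; rewrite addr0. Qed.
Lemma ltDl u v : lt 0 v -> lt u (u + v).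
Proof. by move=> h; have := ltD2l u h; rewrite addr0. Qed.
Lemma ltBrDr u v w : lt (u + v) w -> lt u (w - v).
Proof. by move=> h; have := ltD2r (- v) h; rewrite addrK. Qed.
Lemma ltBlDr u v w : lt w (u + v) -> lt (w - v) u.
Proof. by move=> h; have := ltD2r (- v) h; rewrite addrK. Qed.
Lemma ltBlDl c K v : lt K (c + v) -> lt (K - c) v.
Proof. by move=> h; have := ltD2r (- c) h; rewrite addrAC subrr add0r. Qed.
Lemma ltBrDl c K v : lt (c + v) K -> lt v (K - c).
Proof. by move=> h; have := ltD2r (- c) h; rewrite addrAC subrr add0r. Qed.
Lemma ltBlDlE c K v : lt (K - c) v -> lt K (c + v).
Proof. by move=> h; have := ltD2l c h; rewrite addrCA subrr addr0. Qed.

Lemma ltRxx x : ~ ltR x x.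
Proof. by case: HR => [[h _] _]. Qed.
Lemma ltR_trans x y z : ltR x y -> ltR y z -> ltR x z.
Proof. by case: HR => [[_ [h _]] _]; apply: h. Qed.
Lemma ltR_total x y : ltR x y \/ x = y \/ ltR y x.
Proof. by case: HR => [[_ [_ h]] _]. Qed.
Lemma ltRD2r x y z : ltR x y -> ltR (x + z) (y + z).
Proof. by case: HR => [_ [h _]]; apply: h. Qed.
Lemma ltR_mul x y : ltR 0 x -> ltR 0 y -> ltR 0 (x * y).
Proof. by case: HR => [_ [_ [h _]]]; apply: h. Qed.
Lemma ltR_invertible (x : R) : x != 0 -> exists y, x * y = 1 /\ y * x = 1.
Proof. by case: HR => [_ [_ [_ h]]]; apply: h. Qed.
Lemma ltR_oppr x : ltR x 0 -> ltR 0 (- x).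
Proof. by move=> h; have := ltRD2r (- x) h; rewrite subrr add0r. Qed.
Lemma ltR_oppl x : ltR 0 x -> ltR (- x) 0.
Proof. by move=> h; have := ltRD2r (- x) h; rewrite subrr add0r. Qed.
Lemma ltR01 : ltR 0 1.
Proof.
case: (ltR_total 0 1) => [//|[e|h]]; first by have := oner_neq0 R; rewrite -e eqxx.
have := ltR_mul (ltR_oppr h) (ltR_oppr h); rewrite mulrNN mulr1 => h'.
by case: (ltRxx (ltR_trans h h')).
Qed.
Lemma ltR_inv (x y : R) : ltR 0 x -> x * y = 1 -> ltR 0 y.
Proof.
move=> hx hxy; case: (ltR_total 0 y) => [//|[e|h]].
  by move: hxy; rewrite -e mulr0 => /esym/eqP; rewrite oner_eq0.
have := ltR_mul hx (ltR_oppr h); rewrite mulrN hxy => h'.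
have := ltRD2r 1 h'; rewrite add0r addNr => h2.
by case: (ltRxx (ltR_trans h2 ltR01)).
Qed.
Lemma R_sign (r : R) : ltR 0 r \/ r = 0 \/ ltR r 0.
Proof. by case: (ltR_total 0 r) => [h|[h|h]]; [left|right; left|right; right]. Qed.
Lemma ltR_pos_inv (r : R) : ltR 0 r -> exists s, ltR 0 s /\ r * s = 1 /\ s * r = 1.
Proof.
move=> hr; have : r != 0 by apply/eqP => e; subst; apply: ltRxx hr.
by case/ltR_invertible=> s [h1 h2]; exists s; split=> //; apply: ltR_inv hr h1.
Qed.
Lemma ltR_neg_inv (r : R) : ltR r 0 -> exists s, ltR s 0 /\ r * s = 1 /\ s * r = 1.
Proof.
move=> hr; case: (ltR_pos_inv (ltR_oppr hr)) => s [hs [h1 h2]].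
exists (- s); split; first exact: ltR_oppl.
by rewrite mulrN -mulNr h1 mulNr -mulrN h2.
Qed.
Lemma scaleK (r s : R) (u : M) : s * r = 1 -> s *: (r *: u) = u.
Proof. by move=> h; rewrite scalerA h scale1r. Qed.

Lemma ltZn r x y : ltR r 0 -> lt x y -> lt (r *: y) (r *: x).
Proof. by move=> hr h; have := ltZ (ltR_oppr hr) h; rewrite !scaleNr => /ltN2E. Qed.
Lemma leZn r x y : ltR r 0 -> leM x y -> leM (r *: y) (r *: x).
Proof. by move=> hr [h|->]; [left; apply: ltZn|right]. Qed.

Lemma midpoint p q : lt p q -> exists t, lt p t /\ lt t q.
Proof.
have h2 : ltR 0 (1 + 1 : R).
  by have := ltRD2r 1 ltR01; rewrite add0r; apply: ltR_trans ltR01.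
case: (ltR_pos_inv h2) => c [hc [_ hc2]].
have half (u : M) : c *: (u + u) = u by rewrite -{1 2}[u]scale1r -scalerDl scalerA hc2 scale1r.
move=> h; exists (c *: (p + q)); split.
  by rewrite -{1}(half p); apply: ltZ => //; apply: ltD2l.
by rewrite -{2}(half q); apply: ltZ => //; apply: ltD2r.
Qed.

Lemma wide_interval (p q N : M) : leM 0 N -> lt N (q - p) ->
  exists t1 t2, lt p t1 /\ lt t1 q /\ lt p t2 /\ lt t2 q /\ lt (t1 + N) t2.
Proof.
move=> hN h.
have h1 : lt p (q - N).
  by have := ltD2r (p - N) h; rewrite addrCA subrr addr0 addrA subrK.
case: (midpoint h1) => t1 [h2 h3].
have h4 : lt (t1 + N) q by have := ltD2r N h3; rewrite subrK.
case: (midpoint h4) => t2 [h5 h6].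
have lt12 : lt t1 t2 by apply: le_lt_trans (leDl t1 hN) h5.
exists t1, t2; split=> //; split; first exact: lt_trans lt12 h6.
by split=> //; apply: lt_trans h2 lt12.
Qed.

Definition bnd (N x : M) := leM (- N) x /\ leM x N.

Lemma bndD N N' x y : bnd N x -> bnd N' y -> bnd (N + N') (x + y).
Proof. by move=> [h1 h2] [h3 h4]; split; [rewrite opprD; apply: leD|apply: leD]. Qed.
Lemma bnd_le N N' x : bnd N x -> leM N N' -> bnd N' x.
Proof. by move=> [h1 h2] h; split; [apply: le_trans (leN2 h) h1|apply: le_trans h2 h]. Qed.
Lemma bnd_exists x : exists N, leM 0 N /\ bnd N x.
Proof.
have neg_lt u : lt 0 u -> lt (- u) u.
  by move=> h; have := ltN2 h; rewrite oppr0 => h1; apply: lt_trans h1 h.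
case: (lt_total 0 x) => [h|[<-|h]].
- by exists x; split; [left|split; [left; apply: neg_lt|right]].
- by exists 0; split; [right|split; right; rewrite ?oppr0].
- have h' : lt 0 (- x) by rewrite -oppr0; apply: ltN2.
  exists (- x); split; first by left.
  split; first by rewrite opprK; right.
  by left; move: (neg_lt _ h'); rewrite opprK.
Qed.
Lemma bnd_between N a b t : bnd N a -> bnd N b -> leM a t -> leM t b -> bnd N t.
Proof. by move=> [h1 _] [_ h2] h3 h4; split; [apply: le_trans h1 h3|apply: le_trans h4 h2]. Qed.
Lemma bnd0 N : leM 0 N -> bnd N 0.
Proof. by move=> h; split=> //; rewrite -oppr0; apply: leN2. Qed.
Lemma bndB N u v : bnd N u -> bnd N v -> bnd (N + N) (u - v).
Proof.
move=> hu [h1 h2]; apply: bndD hu _; split; first exact: leN2 h2.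
by have := leN2 h1; rewrite opprK.
Qed.
Lemma bnd_subr N u v : bnd N (u - v) -> leM (v - N) u /\ leM u (v + N).
Proof.
case=> h1 h2; split.
  by have := leD (le_refl v) h1; rewrite addrCA subrr addr0.
by have := leD (le_refl v) h2; rewrite addrCA subrr addr0 addrC.
Qed.
Lemma bndZ (r : R) N : leM 0 N -> exists N', leM 0 N' /\ forall x, bnd N x -> bnd N' (r *: x).
Proof.
move=> hN; case: (R_sign r) => [hr|[->|hr]].
- exists (r *: N); split; first by rewrite -(scaler0 _ r); apply: leZ.
  by move=> x [h1 h2]; split; [rewrite -scalerN; apply: leZ|apply: leZ].
- by exists 0; split; [right|move=> x _; rewrite scale0r; apply: bnd0; right].
- exists (- r *: N); split.
    by rewrite -(scaler0 _ (- r)); apply: leZ => //; apply: ltR_oppr.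
  by move=> x [h1 h2]; split; rewrite scaleNr ?opprK -?scalerN; apply: leZn.
Qed.

Definition padd n (x y : pt n) : pt n := fun i => x i + y i.
Definition psub n (x y : pt n) : pt n := fun i => x i - y i.

Lemma unlift_widen k (j : 'I_k) : unlift ord_max (widen_ord (leqnSn k) j) = Some j.
Proof.
case: unliftP => [j' e|e].
  congr Some; apply: val_inj => /=; move/(congr1 val): e => /= ->.
  by rewrite /bump leqNgt (ltn_ord j').
by move/(congr1 val): e => /= e; have := ltn_ord j; rewrite e ltnn.
Qed.
Lemma proj_ext k (y : pt k) t : proj (ext_pt y t) = y.
Proof. by apply: functional_extensionality => j; rewrite /proj /ext_pt unlift_widen. Qed.
Lemma last_ext k (y : pt k) t : lastc (ext_pt y t) = t.
Proof. by rewrite /lastc /ext_pt unlift_none. Qed.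
Lemma ext_proj k (z : pt k.+1) : ext_pt (proj z) (lastc z) = z.
Proof.
apply: functional_extensionality => i; rewrite /ext_pt /proj /lastc.
case: unliftP => [j ->|-> //].
by congr z; apply: val_inj; rewrite /= /bump leqNgt (ltn_ord j).
Qed.
Lemma coord_ext k (z : pt k.+1) i :
  z i = if unlift ord_max i is Some j then proj z j else lastc z.
Proof. by rewrite -{1}(ext_proj z). Qed.
Lemma pt_eq k (z z' : pt k.+1) : proj z = proj z' -> lastc z = lastc z' -> z = z'.
Proof. by move=> h1 h2; rewrite -(ext_proj z) -(ext_proj z') h1 h2. Qed.
Lemma pt0_eq (x y : pt 0) : x = y.
Proof. by apply: functional_extensionality => -[]. Qed.
Lemma ext_padd k (y y' : pt k) t t' :
  ext_pt (padd y y') (t + t') = padd (ext_pt y t) (ext_pt y' t').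
Proof.
apply: pt_eq; last by rewrite /lastc /padd /ext_pt unlift_none.
by apply: functional_extensionality => j; rewrite /padd /proj /ext_pt unlift_widen.
Qed.
Lemma psub_ext k (z : pt k.+1) y t :
  psub z (ext_pt y t) = ext_pt (psub (proj z) y) (lastc z - t).
Proof.
apply: pt_eq; last by rewrite last_ext /lastc /psub /ext_pt unlift_none.
by rewrite proj_ext; apply: functional_extensionality => j; rewrite /psub /proj /ext_pt unlift_widen.
Qed.
Lemma padd_psub n (x y : pt n) : padd y (psub x y) = x.
Proof. by apply: functional_extensionality => i; rewrite /padd /psub addrC subrK. Qed.

Definition lin n (a : linmap M n) (x : pt n) : M := \sum_(i < n) lcoef a i *: x i.

Lemma leval_lin n (a : linmap M n) x : leval a x = lin a x + lconst a.
Proof. by []. Qed.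
Lemma lin_padd n (a : linmap M n) x y : lin a (padd x y) = lin a x + lin a y.
Proof. by rewrite /lin -big_split /=; apply: eq_bigr => i _; rewrite scalerDr. Qed.
Lemma leval_padd n (a : linmap M n) x y : leval a (padd x y) = lin a x + leval a y.
Proof. by rewrite !leval_lin lin_padd addrA. Qed.

Definition affine n (f : pt n -> M) := exists a : linmap M n, forall x, f x = leval a x.

Lemma affine_leval n (a : linmap M n) : affine (leval a).
Proof. by exists a. Qed.
Lemma affine_lin n (a : linmap M n) : affine (lin a).
Proof. by exists (LinMap (lcoef a) 0) => x; rewrite leval_lin addr0. Qed.
Lemma affine_cst n c : affine (fun _ : pt n => c).
Proof.
exists (LinMap (fun _ => 0) c) => x; rewrite leval_lin /lin /= big1 ?add0r //.
by move=> i _; rewrite scale0r.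
Qed.
Lemma affine_coord n (i : 'I_n) : affine (fun x : pt n => x i).
Proof.
exists (LinMap (fun j => if j == i then 1 else 0) 0) => x; rewrite leval_lin /lin /= addr0.
rewrite (bigD1 i) //= eqxx scale1r big1 ?addr0 // => j /negbTE ->.
by rewrite scale0r.
Qed.
Lemma affineD n (f g : pt n -> M) : affine f -> affine g -> affine (fun x => f x + g x).
Proof.
case=> a ha [b hb].
exists (LinMap (fun i => lcoef a i + lcoef b i) (lconst a + lconst b)) => x.
rewrite ha hb !leval_lin /lin /=.
under [X in _ = X + _]eq_bigr do rewrite scalerDl.
by rewrite big_split /= addrACA.
Qed.
Lemma affineZ n (r : R) (f : pt n -> M) : affine f -> affine (fun x => r *: f x).
Proof.
case=> a ha; exists (LinMap (fun i => r * lcoef a i) (r *: lconst a)) => x.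
rewrite ha !leval_lin /lin /= scalerDr scaler_sumr; congr (_ + _).
by apply: eq_bigr => i _; rewrite scalerA.
Qed.
Lemma affine_eq n (f g : pt n -> M) : affine f -> (forall x, f x = g x) -> affine g.
Proof. by move=> h e; have <- : f = g by apply: functional_extensionality. Qed.
Lemma affineN n (f : pt n -> M) : affine f -> affine (fun x => - f x).
Proof. by move=> h; apply: (affine_eq (affineZ (-1) h)) => x; rewrite scaleN1r. Qed.
Lemma affineB n (f g : pt n -> M) : affine f -> affine g -> affine (fun x => f x - g x).
Proof. by move=> hf hg; apply: affineD => //; apply: affineN. Qed.
Lemma affine_sum n m (G : 'I_m -> pt n -> M) :
  (forall i, affine (G i)) -> affine (fun x => \sum_(i < m) G i x).
Proof.
elim: m G => [|m IH] G hG.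
  by apply: (affine_eq (affine_cst _ 0)) => x; rewrite big_ord0.
apply: (affine_eq (affineD (IH (fun i => G (widen_ord (leqnSn m) i)) _) (hG ord_max))) => //.
by move=> x; rewrite big_ord_recr.
Qed.
Lemma affine_comp n m (f : pt m -> M) (F : pt n -> pt m) :
  affine f -> (forall i, affine (fun x => F x i)) -> affine (fun x => f (F x)).
Proof.
case=> a ha hF.
have hsum := affine_sum (fun i => affineZ (lcoef a i) (hF i)).
by apply: (affine_eq (affineD hsum (affine_cst n (lconst a)))) => x; rewrite ha.
Qed.
Lemma affine_proj k (f : pt k -> M) : affine f -> affine (fun z : pt k.+1 => f (proj z)).
Proof. by move=> h; apply: affine_comp h _ => i; apply: affine_coord. Qed.
Lemma affine_last k : affine (fun z : pt k.+1 => lastc z).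
Proof. exact: affine_coord. Qed.
Lemma affine_ext_pt k (f : pt k.+1 -> M) (h : pt k -> M) :
  affine f -> affine h -> affine (fun y => f (ext_pt y (h y))).
Proof.
move=> hf hh; apply: affine_comp hf _ => i; rewrite /ext_pt.
by case: (unlift ord_max i) => [j|] //; apply: affine_coord.
Qed.
Lemma affine_split k (f : pt k.+1 -> M) : affine f ->
  exists (f1 : pt k -> M) (rho : R), affine f1 /\ forall z, f z = f1 (proj z) + rho *: lastc z.
Proof.
case=> a ha; exists (leval (LinMap (fun j => lcoef a (widen_ord (leqnSn k) j)) (lconst a))).
exists (lcoef a ord_max); split; first exact: affine_leval.
by move=> z; rewrite ha !leval_lin /lin big_ord_recr /= addrAC.
Qed.

Lemma set_eq n (A B : pt n -> Prop) : (forall x, A x <-> B x) -> A = B.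
Proof. by move=> h; apply: functional_extensionality => x; apply: propositional_extensionality. Qed.

Definition fib k (X : pt k -> Prop) (F : pt k -> M -> Prop) : pt k.+1 -> Prop :=
  fun z => X (proj z) /\ F (proj z) (lastc z).

Definition cyl k (a b : extmap M k) (y : pt k) (t : M) : Prop :=
  ext_lt lt (eeval a y) (MFin t) /\ ext_lt lt (MFin t) (eeval b y).

Lemma fib_ext k X F (y : pt k) t : fib X F (ext_pt y t) <-> X y /\ F y t.
Proof. by rewrite /fib proj_ext last_ext. Qed.

Lemma proj_fib k (X : pt k -> Prop) F :
  (forall y, X y -> exists t, F y t) -> proj_set (fib X F) = X.
Proof.
move=> h; apply: set_eq => y; split.
  by case=> z [[hz _] e]; have <- : proj z = y by apply: functional_extensionality.
move=> hy; case: (h y hy) => t ht; exists (ext_pt y t); split; first by apply/fib_ext.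
by move=> j; rewrite proj_ext.
Qed.

Lemma fib_graph_eq k (X : pt k -> Prop) (a : linmap M k) (C : pt k.+1 -> Prop) :
  (forall x, C x <-> X (proj x) /\ lastc x = leval a (proj x)) ->
  C = fib X (fun y t => t = leval a y).
Proof. exact: set_eq. Qed.
Lemma fib_cyl_eq k (X : pt k -> Prop) (a b : extmap M k) (C : pt k.+1 -> Prop) :
  (forall x, C x <-> X (proj x) /\ ext_lt lt (eeval a (proj x)) (MFin (lastc x))
                                    /\ ext_lt lt (MFin (lastc x)) (eeval b (proj x))) ->
  C = fib X (cyl a b).
Proof. exact: set_eq. Qed.

Lemma ext_lt_trans (a b c : extM M) : ext_lt lt a b -> ext_lt lt b c -> ext_lt lt a c.
Proof. by case: a; case: b; case: c => //= *; apply: lt_trans; eassumption. Qed.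

Lemma cell_graph k (X : pt k -> Prop) phi : linear_cell lt X -> affine phi ->
  linear_cell lt (fib X (fun y t => t = phi y)).
Proof. by move=> hX [a ha]; apply: (lc_graph (a := a) hX) => z; rewrite /fib ha. Qed.

Lemma cell_cyl k (X : pt k -> Prop) (a b : extmap M k) : linear_cell lt X ->
  (forall y, X y -> ext_lt lt (eeval a y) (eeval b y)) -> linear_cell lt (fib X (cyl a b)).
Proof. by move=> hX hab; apply: (lc_cyl hX hab). Qed.

Lemma cell_band k (X : pt k -> Prop) f g : linear_cell lt X -> affine f -> affine g ->
  (forall y, X y -> lt (f y) (g y)) ->
  linear_cell lt (fib X (fun y t => lt (f y) t /\ lt t (g y))).
Proof.
move=> hX [a ha] [b hb] h.
have -> : (fun y t => lt (f y) t /\ lt t (g y)) = cyl (Fin a) (Fin b).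
  by apply: functional_extensionality => y; apply: functional_extensionality => t; rewrite ha hb.
by apply: cell_cyl => // y hy; rewrite /= -ha -hb; apply: h.
Qed.

Lemma cell_above k (X : pt k -> Prop) f : linear_cell lt X -> affine f ->
  linear_cell lt (fib X (fun y t => lt (f y) t)).
Proof.
move=> hX [a ha].
have -> : (fun y t => lt (f y) t) = cyl (Fin a) PosInf.
  apply: functional_extensionality => y; apply: functional_extensionality => t.
  by rewrite ha; apply: propositional_extensionality; split=> [|[]].
exact: cell_cyl.
Qed.

Lemma cell_below k (X : pt k -> Prop) f : linear_cell lt X -> affine f ->
  linear_cell lt (fib X (fun y t => lt t (f y))).
Proof.
move=> hX [a ha].
have -> : (fun y t => lt t (f y)) = cyl NegInf (Fin a).
  apply: functional_extensionality => y; apply: functional_extensionality => t.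
  by rewrite ha; apply: propositional_extensionality; split=> [|[]].
exact: cell_cyl.
Qed.

Lemma cell_all k (X : pt k -> Prop) : linear_cell lt X -> linear_cell lt (fib X (fun _ _ => True)).
Proof.
move=> hX; have -> : (fun (_ : pt k) (_ : M) => True) = cyl NegInf PosInf.
  apply: functional_extensionality => y; apply: functional_extensionality => t.
  by apply: propositional_extensionality.
exact: cell_cyl.
Qed.

Lemma pu_proj k (C : pt k.+1 -> Prop) :
  purely_unbounded lt C -> purely_unbounded lt (proj_set C).
Proof. by case=> [[]|[_ []]]. Qed.

Lemma pu_graph k (X : pt k -> Prop) phi : purely_unbounded lt X ->
  purely_unbounded lt (fib X (fun y t => t = phi y)).
Proof.
move=> hX /=; left; split.
  move=> z z' [_ ->] [_ ->] e.
  by have -> : proj z = proj z' by apply: functional_extensionality.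
by rewrite proj_fib // => y _; exists (phi y).
Qed.

Lemma pu_fib k (X : pt k -> Prop) F : purely_unbounded lt X ->
  (forall y, X y -> exists t, F y t) ->
  (forall N, leM 0 N -> exists y, X y /\ exists t1 t2, F y t1 /\ F y t2 /\ lt (t1 + N) t2) ->
  purely_unbounded lt (fib X F).
Proof.
move=> hX hne hbig /=; rewrite proj_fib //.
case: (classic (is_graph_set (fib X F))) => hg; [left|right]; split=> //.
split=> // N hN; case: (hbig N hN) => y [hy [t1 [t2 [h1 [h2 h3]]]]].
exists (ext_pt y t1); split; first by apply/fib_ext.
exists t2; rewrite proj_ext; split; first by apply/fib_ext.
by rewrite last_ext => -[_ h]; apply: le_lt_false h h3.
Qed.

Variable e0 : M.
Hypothesis He0 : lt 0 e0.

Lemma lt_add_e0 x : lt x (x + e0).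
Proof. exact: ltDl. Qed.
Lemma lt_sub_e0 x : lt (x - e0) x.
Proof. by have := ltD2r (x - e0) He0; rewrite add0r addrCA subrr addr0. Qed.

Lemma ext_lt_between (a b : extM M) :
  ext_lt lt a b -> exists t, ext_lt lt a (MFin t) /\ ext_lt lt (MFin t) b.
Proof.
case: a => [|p|]; case: b => [|q|] //= h.
- by exists (q - e0); split=> //; apply: lt_sub_e0.
- exact: midpoint.
- by exists (p + e0); split=> //; apply: lt_add_e0.
Qed.

Lemma cell_nonempty n (C : pt n -> Prop) : linear_cell lt C -> exists x, C x.
Proof.
elim=> {n C} [C hC|k X a C _ [y hy] hC|k X a b C _ [y hy] hab hC].
- by exists (fun i => 0).
- by exists (ext_pt y (leval a y)); apply/hC; rewrite proj_ext last_ext.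
- case: (ext_lt_between (hab _ hy)) => t [h1 h2].
  by exists (ext_pt y t); apply/hC; rewrite proj_ext last_ext.
Qed.

Definition bounded_on n (D : pt n -> Prop) (f : pt n -> M) :=
  exists N, leM 0 N /\ forall d, D d -> bnd N (f d).

Lemma graph_fun_eq k (X : pt k -> Prop) phi (f : pt k.+1 -> M) z :
  fib X (fun y t => t = phi y) z -> f z = f (ext_pt (proj z) (phi (proj z))).
Proof. by case=> _ e; rewrite -e ext_proj. Qed.

Lemma cyl_fiber_nonempty k (X : pt k -> Prop) (a b : extmap M k) :
  (forall y, X y -> ext_lt lt (eeval a y) (eeval b y)) -> forall y, X y -> exists t, cyl a b y t.
Proof. by move=> hab y hy; apply: ext_lt_between; apply: hab. Qed.

(* A cylinder is not a graph, so its fibres spread unboundedly; a nonzero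
   slope [rho] would carry this spread over to the bounded map. *)
Lemma pu_cyl_slope0 k (X : pt k -> Prop) (a b : extmap M k) f1 rho :
  linear_cell lt X -> (forall y, X y -> ext_lt lt (eeval a y) (eeval b y)) ->
  purely_unbounded lt (fib X (cyl a b)) ->
  bounded_on (fib X (cyl a b)) (fun z => f1 (proj z) + rho *: lastc z) -> rho = 0.
Proof.
move=> hX hab hpu [N [hN hb]]; apply: NNPP => hr.
have [s [_ hs]] : exists s, rho * s = 1 /\ s * rho = 1 by apply: ltR_invertible; apply/eqP.
case: (cell_nonempty hX) => y hy; case: (ext_lt_between (hab _ hy)) => t1 [h1 h2].
move: hpu => /= [[hg _]|[_ [_ hbig]]].
- case: (ext_lt_between h2) => t2 [h3 h4].
  have m1 : fib X (cyl a b) (ext_pt y t1) by apply/fib_ext.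
  have m2 : fib X (cyl a b) (ext_pt y t2).
    by apply/fib_ext; split=> //; split=> //; apply: ext_lt_trans h1 h3.
  have := hg _ _ m1 m2; rewrite !last_ext !proj_ext => /(_ (fun j => erefl)) e.
  by subst; apply: (ltxx h3).
- case: (bndZ s (addr_ge0 hN hN)) => N' [hN' hsc].
  case: (hbig N' hN') => x [hx [t [ht hnot]]]; apply: hnot.
  have hx' : fib X (cyl a b) (ext_pt (proj x) (lastc x)) by rewrite ext_proj.
  have := bndB (hb _ ht) (hb _ hx'); rewrite !proj_ext !last_ext.
  by rewrite opprD addrACA subrr add0r -scalerBr => /hsc; rewrite scaleK // => /bnd_subr.
Qed.

Lemma affine_bounded_const n (J : pt n -> Prop) : linear_cell lt J -> purely_unbounded lt J ->
  forall f, affine f -> bounded_on J f -> forall x y, J x -> J y -> f x = f y.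
Proof.
elim=> {n J} [J _|k X a J hX IH hJ|k X a b J hX IH hab hJ].
- by move=> _ f _ _ x y _ _; rewrite (pt0_eq x y).
- move: (fib_graph_eq hJ) => eJ {hJ}; subst J => hpu f hf [N [hN hb]] x y hx hy.
  rewrite (graph_fun_eq f hx) (graph_fun_eq f hy).
  apply: (IH _ _ (affine_ext_pt hf (affine_leval a)) _ _ _ (proj1 hx) (proj1 hy)).
    by move: (pu_proj hpu); rewrite proj_fib // => w _; exists (leval a w).
  by exists N; split=> // w hw; apply: hb; apply/fib_ext.
- move: (fib_cyl_eq hJ) => eJ {hJ}; subst J => hpu f hf hb.
  case: (affine_split hf) => f1 [rho [hf1 ef]].
  have ef' : f = fun z => f1 (proj z) + rho *: lastc z by apply: functional_extensionality.
  subst f; have rho0 := pu_cyl_slope0 hX hab hpu hb; subst rho.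
  move=> x y hx hy; rewrite !scale0r !addr0.
  apply: (IH _ _ hf1 _ _ _ (proj1 hx) (proj1 hy)).
    by move: (pu_proj hpu); rewrite proj_fib //; apply: cyl_fiber_nonempty.
  case: hb => N [hN hb]; exists N; split=> // w hw.
  case: (cyl_fiber_nonempty hab hw) => t ht.
  have hz : fib X (cyl a b) (ext_pt w t) by apply/fib_ext.
  by have := hb _ hz; rewrite proj_ext scale0r addr0.
Qed.

Lemma affine_no_min n (C : pt n -> Prop) : linear_cell lt C -> forall f, affine f ->
  forall x, C x -> (exists y, C y /\ f y <> f x) -> exists y, C y /\ lt (f y) (f x).
Proof.
elim=> {n C} [C _|k X a C hX IH hC|k X a b C hX IH hab hC] f hf.
- by move=> x _ [y [_ []]]; rewrite (pt0_eq x y).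
- move: (fib_graph_eq hC) => eC {hC}; subst C => x hx [y [hy ne]].
  case: (IH _ (affine_ext_pt hf (affine_leval a)) _ (proj1 hx)).
    by exists (proj y); split; [case: hy|rewrite -(graph_fun_eq f hx) -(graph_fun_eq f hy)].
  move=> w [hw lw]; exists (ext_pt w (leval a w)); split; first by apply/fib_ext.
  by rewrite (graph_fun_eq f hx).
- move: (fib_cyl_eq hC) => eC {hC}; subst C.
  case: (affine_split hf) => f1 [rho [hf1 ef]].
  move=> x [hx [h1 h2]] [y [hy ne]].
  case: (R_sign rho) => [hr|[hr|hr]].
  + case: (ext_lt_between h1) => t [h3 h4]; exists (ext_pt (proj x) t); split.
      by apply/fib_ext; split=> //; split=> //; apply: ext_lt_trans h4 h2.
    by rewrite !ef proj_ext last_ext; apply: ltD2l; apply: ltZ.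
  + have e z : f z = f1 (proj z) by rewrite ef hr scale0r addr0.
    case: (IH _ hf1 _ hx); first by exists (proj y); split; [case: hy|rewrite -!e].
    move=> w [hw lw]; case: (cyl_fiber_nonempty hab hw) => t ht.
    by exists (ext_pt w t); split; [apply/fib_ext|rewrite !e proj_ext].
  + case: (ext_lt_between h2) => t [h3 h4]; exists (ext_pt (proj x) t); split.
      by apply/fib_ext; split=> //; split=> //; apply: ext_lt_trans h1 h3.
    by rewrite !ef proj_ext last_ext; apply: ltD2l; apply: ltZn.
Qed.

Definition ub n (C : pt n -> Prop) (f : pt n -> M) K := forall x, C x -> leM (f x) K.
Definition has_sup n (C : pt n -> Prop) (f : pt n -> M) :=
  (exists K, ub C f K) -> exists m, ub C f m /\ forall K, ub C f K -> leM m K.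

Lemma has_sup_transfer n m (C : pt n -> Prop) (X : pt m -> Prop) f g :
  (forall K, ub C f K <-> ub X g K) -> has_sup X g -> has_sup C f.
Proof.
move=> eq hX [K /eq hK]; case: (hX (ex_intro _ K hK)) => s [h1 h2].
by exists s; split; [apply/eq|move=> K' /eq; apply: h2].
Qed.

Lemma ub_graph k (X : pt k -> Prop) phi f K :
  ub (fib X (fun y t => t = phi y)) f K <-> ub X (fun y => f (ext_pt y (phi y))) K.
Proof.
split=> h w hw; first by apply: h; apply/fib_ext.
by rewrite (graph_fun_eq f hw); apply: h; case: hw.
Qed.

Lemma ub_fib_proj k (X : pt k -> Prop) F f K : (forall y, X y -> exists t, F y t) ->
  ub (fib X F) (fun z => f (proj z)) K <-> ub X f K.
Proof.
move=> hne; split=> h w hw; last by apply: h; case: hw.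
case: (hne w hw) => t ht; have hz : fib X F (ext_pt w t) by apply/fib_ext.
by have := h _ hz; rewrite proj_ext.
Qed.

Lemma exceed_at_pinfty (rho : R) c K t0 : ltR 0 rho -> exists t, lt t0 t /\ lt K (c + rho *: t).
Proof.
move=> hr; case: (ltR_pos_inv hr) => s [hs [h1 h2]]; set u := s *: (K - c).
have key t : lt u t -> lt K (c + rho *: t).
  by move=> ht; apply: ltBlDlE; have := ltZ hr ht; rewrite /u scaleK.
case: (lt_total t0 u) => [h|[h|h]].
- by exists (u + e0); split; [apply: lt_trans h (lt_add_e0 _)|apply: key; apply: lt_add_e0].
- by exists (u + e0); subst; split; [apply: lt_add_e0|apply: key; apply: lt_add_e0].
- by exists (t0 + e0); split; [apply: lt_add_e0|apply: key; apply: lt_trans h (lt_add_e0 _)].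
Qed.
Lemma exceed_at_ninfty (rho : R) c K t0 : ltR rho 0 -> exists t, lt t t0 /\ lt K (c + rho *: t).
Proof.
move=> hr; case: (ltR_neg_inv hr) => s [hs [h1 h2]]; set u := s *: (K - c).
have key t : lt t u -> lt K (c + rho *: t).
  by move=> ht; apply: ltBlDlE; have := ltZn hr ht; rewrite /u scaleK.
case: (lt_total t0 u) => [h|[h|h]].
- by exists (t0 - e0); split; [apply: lt_sub_e0|apply: key; apply: lt_trans (lt_sub_e0 _) h].
- by exists (u - e0); subst; split; [apply: lt_sub_e0|apply: key; apply: lt_sub_e0].
- by exists (u - e0); split; [apply: lt_trans (lt_sub_e0 _) h|apply: key; apply: lt_sub_e0].
Qed.

Lemma exceed_near_sup (rho : R) (a : extM M) t1 beta c K : ltR 0 rho ->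
  ext_lt lt a (MFin t1) -> lt t1 beta -> lt K (c + rho *: beta) ->
  exists t, ext_lt lt a (MFin t) /\ lt t beta /\ lt K (c + rho *: t).
Proof.
move=> hr h1 h2 h3; case: (ltR_pos_inv hr) => s [hs [e1 e2]]; set u := s *: (K - c).
have key t : lt u t -> lt K (c + rho *: t).
  by move=> ht; apply: ltBlDlE; have := ltZ hr ht; rewrite /u scaleK.
have hub : lt u beta by have := ltZ hs (ltBlDl h3); rewrite scaleK.
case: (classic (lt u t1)) => hu; first by exists t1; split=> //; split=> //; apply: key.
case: (midpoint hub) => t [ht1 ht2].
exists t; split; last by split=> //; apply: key.
by apply: ext_lt_trans h1 _; apply: le_lt_trans (not_lt hu) ht1.
Qed.
Lemma exceed_near_inf (rho : R) (b : extM M) t1 alpha c K : ltR rho 0 ->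
  lt alpha t1 -> ext_lt lt (MFin t1) b -> lt K (c + rho *: alpha) ->
  exists t, lt alpha t /\ ext_lt lt (MFin t) b /\ lt K (c + rho *: t).
Proof.
move=> hr h1 h2 h3; case: (ltR_neg_inv hr) => s [hs [e1 e2]]; set u := s *: (K - c).
have key t : lt t u -> lt K (c + rho *: t).
  by move=> ht; apply: ltBlDlE; have := ltZn hr ht; rewrite /u scaleK.
have hub : lt alpha u by have := ltZn hs (ltBlDl h3); rewrite scaleK.
case: (classic (lt t1 u)) => hu; first by exists t1; split=> //; split=> //; apply: key.
case: (midpoint hub) => t [ht1 ht2].
exists t; split=> //; split; last by apply: key.
by apply: ext_lt_trans h2; apply: lt_le_trans ht2 (not_lt hu).
Qed.

Lemma ub_cyl_pos k (X : pt k -> Prop) (a : extmap M k) (be : linmap M k) f1 rho K :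
  ltR 0 rho -> (forall y, X y -> ext_lt lt (eeval a y) (MFin (leval be y))) ->
  ub (fib X (cyl a (Fin be))) (fun z => f1 (proj z) + rho *: lastc z) K <->
  ub X (fun y => f1 y + rho *: leval be y) K.
Proof.
move=> hr hab; split=> h w hw.
  apply: not_lt => hlt; case: (ext_lt_between (hab w hw)) => t1 [ht1 ht2].
  case: (exceed_near_sup hr ht1 ht2 hlt) => t [h3 [h4 h5]].
  have hz : fib X (cyl a (Fin be)) (ext_pt w t) by apply/fib_ext.
  by have := h _ hz; rewrite proj_ext last_ext => /le_lt_false; apply.
case: hw => hw [_ hb]; apply: le_trans (h _ hw); left.
by apply: ltD2l; apply: ltZ.
Qed.
Lemma ub_cyl_neg k (X : pt k -> Prop) (al : linmap M k) (b : extmap M k) f1 rho K :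
  ltR rho 0 -> (forall y, X y -> ext_lt lt (MFin (leval al y)) (eeval b y)) ->
  ub (fib X (cyl (Fin al) b)) (fun z => f1 (proj z) + rho *: lastc z) K <->
  ub X (fun y => f1 y + rho *: leval al y) K.
Proof.
move=> hr hab; split=> h w hw.
  apply: not_lt => hlt; case: (ext_lt_between (hab w hw)) => t1 [ht1 ht2].
  case: (exceed_near_inf hr ht1 ht2 hlt) => t [h3 [h4 h5]].
  have hz : fib X (cyl (Fin al) b) (ext_pt w t) by apply/fib_ext.
  by have := h _ hz; rewrite proj_ext last_ext => /le_lt_false; apply.
case: hw => hw [ha _]; apply: le_trans (h _ hw); left.
by apply: ltD2l; apply: ltZn.
Qed.

Lemma no_ub_cyl_pos k (X : pt k -> Prop) (a : extmap M k) f1 rho K y0 :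
  ltR 0 rho -> X y0 -> ext_lt lt (eeval a y0) MPos ->
  ~ ub (fib X (cyl a PosInf)) (fun z => f1 (proj z) + rho *: lastc z) K.
Proof.
move=> hr hy0 h hK; case: (ext_lt_between h) => t0 [ht0 _].
case: (exceed_at_pinfty (f1 y0) K t0 hr) => t [h1 h2].
have hz : fib X (cyl a PosInf) (ext_pt y0 t).
  by apply/fib_ext; split=> //; split=> //; apply: ext_lt_trans ht0 _.
by have := hK _ hz; rewrite proj_ext last_ext => /le_lt_false; case.
Qed.
Lemma no_ub_cyl_neg k (X : pt k -> Prop) (b : extmap M k) f1 rho K y0 :
  ltR rho 0 -> X y0 -> ext_lt lt MNeg (eeval b y0) ->
  ~ ub (fib X (cyl NegInf b)) (fun z => f1 (proj z) + rho *: lastc z) K.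
Proof.
move=> hr hy0 h hK; case: (ext_lt_between h) => t0 [_ ht0].
case: (exceed_at_ninfty (f1 y0) K t0 hr) => t [h1 h2].
have hz : fib X (cyl NegInf b) (ext_pt y0 t).
  by apply/fib_ext; split=> //; split=> //; apply: ext_lt_trans ht0.
by have := hK _ hz; rewrite proj_ext last_ext => /le_lt_false; case.
Qed.

Lemma cell_has_sup n (C : pt n -> Prop) : linear_cell lt C -> forall f, affine f -> has_sup C f.
Proof.
elim=> {n C} [C hC|k X a C hX IH hC|k X a b C hX IH hab hC] f hf.
- move=> _; exists (f (fun _ => 0)); split; last by move=> K /(_ _ (hC _)).
  by move=> x _; rewrite (pt0_eq x (fun _ => 0)); right.
- move: (fib_graph_eq hC) => eC {hC}; subst C.
  apply: has_sup_transfer (ub_graph _ _ _) (IH _ _).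
  exact: affine_ext_pt hf (affine_leval a).
- move: (fib_cyl_eq hC) => eC {hC}; subst C; case: (affine_split hf) => f1 [rho [hf1 ef]].
  have -> : f = fun z => f1 (proj z) + rho *: lastc z by apply: functional_extensionality.
  case: (cell_nonempty hX) => y0 hy0; case: (R_sign rho) => [hr|[->|hr]].
  + case: b hab => [|be|] hab.
    * by move: (hab _ hy0); case: (eeval a y0).
    * apply: has_sup_transfer (fun K => ub_cyl_pos f1 K hr hab) (IH _ _).
      exact: affineD hf1 (affineZ _ (affine_leval be)).
    * by case=> K hK; case: (no_ub_cyl_pos hr hy0 (hab _ hy0) hK).
  + have -> : (fun z => f1 (proj z) + 0 *: lastc z) = fun z => f1 (proj z).
      by apply: functional_extensionality => z; rewrite scale0r addr0.
    exact: has_sup_transfer (fun K => ub_fib_proj f1 K (cyl_fiber_nonempty hab)) (IH _ hf1).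
  + case: a hab => [|al|] hab.
    * by case=> K hK; case: (no_ub_cyl_neg hr hy0 (hab _ hy0) hK).
    * apply: has_sup_transfer (fun K => ub_cyl_neg f1 K hr hab) (IH _ _).
      exact: affineD hf1 (affineZ _ (affine_leval al)).
    * by move: (hab _ hy0); case: (eeval b y0).
Qed.

Lemma bounded_on_cst n (D : pt n -> Prop) c : bounded_on D (fun _ => c).
Proof. by case: (bnd_exists c) => N [h1 h2]; exists N. Qed.
Lemma bounded_onD n (D : pt n -> Prop) f g :
  bounded_on D f -> bounded_on D g -> bounded_on D (fun x => f x + g x).
Proof.
case=> N [hN h] [N' [hN' h']]; exists (N + N'); split; first exact: addr_ge0.
by move=> d hd; apply: bndD; [apply: h|apply: h'].
Qed.
Lemma bounded_onZ n (D : pt n -> Prop) (r : R) f :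
  bounded_on D f -> bounded_on D (fun x => r *: f x).
Proof.
case=> N [hN h]; case: (bndZ r hN) => N' [hN' h']; exists N'; split=> // d hd.
by apply: h'; apply: h.
Qed.
Lemma bounded_on_sum n m (D : pt n -> Prop) (G : 'I_m -> pt n -> M) :
  (forall i, bounded_on D (G i)) -> bounded_on D (fun x => \sum_(i < m) G i x).
Proof.
elim: m G => [|m IH] G hG.
  case: (bounded_on_cst D 0) => N [hN h].
  by exists N; split=> // d hd; rewrite big_ord0; apply: h hd.
case: (bounded_onD (IH (fun i => G (widen_ord (leqnSn m) i)) (fun i => hG _)) (hG ord_max)).
by move=> N [hN h]; exists N; split=> // d hd; rewrite big_ord_recr; apply: h.
Qed.
Lemma bounded_on_affine n (D : pt n -> Prop) f :
  bounded_set lt D -> affine f -> bounded_on D f.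
Proof.
move=> [N [hN hb]] [a ha].
have hcoord i : bounded_on D (fun x => x i) by exists N; split=> // d hd; apply: hb.
have hsum := bounded_on_sum (fun i => bounded_onZ (lcoef a i) (hcoord i)).
case: (bounded_onD hsum (bounded_on_cst D (lconst a))) => N' [hN' h'].
by exists N'; split=> // d hd; rewrite ha; apply: h'.
Qed.
Lemma bounded_between n (D : pt n -> Prop) f g : bounded_on D f -> bounded_on D g ->
  exists N, leM 0 N /\ forall d s, D d -> leM (f d) s -> leM s (g d) -> bnd N s.
Proof.
case=> N [hN h] [N' [hN' h']]; exists (N + N'); split; first exact: addr_ge0.
have l1 : leM N (N + N') by apply: leDl.
have l2 : leM N' (N + N') by rewrite addrC; apply: leDl.
by move=> d s hd; apply: bnd_between (bnd_le (h _ hd) l1) (bnd_le (h' _ hd) l2).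
Qed.

(* A product cell [S = J + D] together with a projection [P : S -> J] that is
   affine; affinity of [P] is what allows the decomposition to be lifted to
   the cells built over [S]. *)
Record decomposition n (S J D : pt n -> Prop) (P : pt n -> pt n) : Prop := Decomposition {
  dec_J_cell : linear_cell lt J;
  dec_J_pu : purely_unbounded lt J;
  dec_D_cell : linear_cell lt D;
  dec_D_bounded : bounded_set lt D;
  dec_P_affine : forall i, affine (fun x => P x i);
  dec_split : forall x, S x -> J (P x) /\ D (psub x (P x));
  dec_padd : forall g d, J g -> D d -> S (padd g d);
  dec_unique : forall g g' d d', J g -> J g' -> D d -> D d' ->
    padd g d = padd g' d' -> g = g' /\ d = d' }.

Definition strong_product_cell n (S : pt n -> Prop) :=
  linear_cell lt S /\ exists J D P, @decomposition n S J D P.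

Lemma strong_product_cellP n (S : pt n -> Prop) : strong_product_cell S -> product_cell lt S.
Proof.
case=> hS [J [D [P hd]]]; split=> //; exists J, D.
split; first exact: dec_J_cell hd. split; first exact: dec_J_pu hd.
split; first exact: dec_D_cell hd. split; first exact: dec_D_bounded hd.
split.
  move=> c; split.
    move=> hc; case: (dec_split hd hc) => hg hd'; exists (P c), (psub c (P c)).
    by split=> //; split=> // i; rewrite /psub addrC subrK.
  case=> g [d [hg [hd' e]]].
  have -> : c = padd g d by apply: functional_extensionality.
  exact: (dec_padd hd hg hd').
move=> g g' d d' hg hg' hd1 hd2 e.
by case: (dec_unique hd hg hg' hd1 hd2 (functional_extensionality _ _ e)) => -> ->.
Qed.

Lemma decomposition_P n (S J D : pt n -> Prop) P g d : decomposition S J D P -> J g -> D d ->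
  P (padd g d) = g /\ psub (padd g d) (P (padd g d)) = d.
Proof.
move=> hd hg hd'; case: (dec_split hd (dec_padd hd hg hd')) => hj hd''.
by apply: (dec_unique hd hj hg hd'' hd'); rewrite padd_psub.
Qed.

(* The new projection is [z |-> (P (proj z), tau z)]; one of the two
   fibrations [FJ], [FD] must be a graph for the sum to be unique. *)
Lemma strong_product_lift k (Y J D : pt k -> Prop) (P : pt k -> pt k) (S : pt k.+1 -> Prop)
    (FJ FD : pt k -> M -> Prop) (tau : pt k.+1 -> M) :
  decomposition Y J D P -> linear_cell lt S ->
  linear_cell lt (fib J FJ) -> purely_unbounded lt (fib J FJ) ->
  linear_cell lt (fib D FD) -> (exists N, leM 0 N /\ forall d s, D d -> FD d s -> bnd N s) ->
  affine tau ->
  (forall z, S z -> Y (proj z) /\ FJ (P (proj z)) (tau z) /\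
                   FD (psub (proj z) (P (proj z))) (lastc z - tau z)) ->
  (forall g d t s, J g -> D d -> FJ g t -> FD d s -> S (ext_pt (padd g d) (t + s))) ->
  (forall g t t', J g -> FJ g t -> FJ g t' -> t = t') \/
  (forall d s s', D d -> FD d s -> FD d s' -> s = s') ->
  strong_product_cell S.
Proof.
move=> hY hS hJ' hpJ' hD' [N2 [hN2 hb2]] htau hcov hsum hfun.
have [N1 [hN1 hb1]] := dec_D_bounded hY.
split=> //; exists (fib J FJ), (fib D FD), (fun z => ext_pt (P (proj z)) (tau z)).
split=> //.
- exists (N1 + N2); split; first exact: addr_ge0.
  move=> z [hz hf] i; rewrite coord_ext; case: (unlift ord_max i) => [j|].
    by apply: bnd_le (hb1 _ hz j) _; apply: leDl.
  by apply: bnd_le (hb2 _ _ hz hf) _; rewrite addrC; apply: leDl.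
- move=> i; rewrite /ext_pt; case: (unlift ord_max i) => [j|] //.
  exact: affine_proj (dec_P_affine hY j).
- move=> z hz; case: (hcov _ hz) => hy [hfj hfd]; case: (dec_split hY hy) => hj hd.
  by split; [apply/fib_ext|rewrite psub_ext; apply/fib_ext].
- move=> g d [hg hfg] [hd hfd].
  by rewrite -(ext_proj g) -(ext_proj d) -ext_padd; apply: hsum.
- move=> g g' d d' [hg hfg] [hg' hfg'] [hd hfd] [hd' hfd'] e.
  have ep : padd (proj g) (proj d) = padd (proj g') (proj d').
    by move: (congr1 (@proj _ _ k) e); rewrite -(ext_proj g) -(ext_proj d) -ext_padd
      -(ext_proj g') -(ext_proj d') -ext_padd !proj_ext.
  have el : lastc g + lastc d = lastc g' + lastc d' by move: (congr1 (@lastc _ _ k) e).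
  case: (dec_unique hY hg hg' hd hd' ep) => eg ed.
  rewrite -eg in hfg'; rewrite -ed in hfd'.
  have [lg ld] : lastc g = lastc g' /\ lastc d = lastc d'.
    case: hfun => hf.
      by have lg := hf _ _ _ hg hfg hfg'; split=> //; move: el; rewrite lg; apply: addrI.
    by have ld := hf _ _ _ hd hfd hfd'; split=> //; move: el; rewrite ld; apply: addIr.
  by split; apply: pt_eq.
Qed.

Fixpoint covers n (L : seq (pt n -> Prop)) (x : pt n) : Prop :=
  if L is A :: L' then A x \/ covers L' x else False.
Fixpoint disjoint_cells n (L : seq (pt n -> Prop)) : Prop :=
  if L is A :: L' then (forall x, A x -> ~ covers L' x) /\ disjoint_cells L' else True.
Fixpoint all_strong n (L : seq (pt n -> Prop)) : Prop :=
  if L is A :: L' then strong_product_cell A /\ all_strong L' else True.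

Definition strong_partition n (C : pt n -> Prop) :=
  exists L, all_strong L /\ disjoint_cells L /\ forall x, C x <-> covers L x.

Lemma covers_cat n (L1 L2 : seq (pt n -> Prop)) x :
  covers (L1 ++ L2) x <-> covers L1 x \/ covers L2 x.
Proof. by elim: L1 => [|A L1 IH] /=; [split; [right|case]|rewrite IH; tauto]. Qed.
Lemma all_strong_cat n (L1 L2 : seq (pt n -> Prop)) :
  all_strong L1 -> all_strong L2 -> all_strong (L1 ++ L2).
Proof. by elim: L1 => [|A L1 IH] //= [h1 h2] h3; split=> //; apply: IH. Qed.
Lemma disjoint_cells_cat n (L1 L2 : seq (pt n -> Prop)) :
  disjoint_cells L1 -> disjoint_cells L2 ->
  (forall x, covers L1 x -> covers L2 x -> False) -> disjoint_cells (L1 ++ L2).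
Proof.
elim: L1 => [|A L1 IH] //= [h1 h2] h3 h4; split.
  by move=> x hx; rewrite covers_cat => -[h|h]; [apply: h1 hx h|apply: (h4 x) => //; left].
by apply: IH h2 h3 _ => x hx hx'; apply: (h4 x) => //; right.
Qed.

Lemma strong_partition0 n (C : pt n -> Prop) : (forall x, ~ C x) -> strong_partition C.
Proof. by move=> h; exists [::]; split=> //; split=> // x; split=> [/h|]. Qed.
Lemma strong_partition1 n (C : pt n -> Prop) : strong_product_cell C -> strong_partition C.
Proof. by move=> h; exists [:: C]; split=> //; split=> [|x /=]; [split=> // x _ []|tauto]. Qed.
Lemma strong_partitionU n (A B : pt n -> Prop) :
  strong_partition A -> strong_partition B -> (forall x, A x -> B x -> False) ->
  strong_partition (fun x => A x \/ B x).
Proof.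
case=> LA [hA [hdA eA]] [LB [hB [hdB eB]]] hAB.
exists (LA ++ LB); split; first exact: all_strong_cat.
split; first by apply: disjoint_cells_cat => // x /eA ha /eB hb; apply: hAB ha hb.
by move=> x; rewrite covers_cat -eA -eB.
Qed.
Lemma strong_partition_eq n (A B : pt n -> Prop) :
  strong_partition A -> (forall x, A x <-> B x) -> strong_partition B.
Proof. by move=> hA /set_eq <-. Qed.

Lemma strong_partition_fib k (X : pt k -> Prop) (F : pt k -> M -> Prop) :
  strong_partition X ->
  (forall Y, strong_product_cell Y -> (forall y, Y y -> X y) -> strong_partition (fib Y F)) ->
  strong_partition (fib X F).
Proof.
case=> L [hL [hdL hX]] hY.
apply: (@strong_partition_eq _ (fib (covers L) F)); last by move=> z; rewrite /fib hX.
have {}hY Y : strong_product_cell Y -> (forall y, Y y -> covers L y) ->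
    strong_partition (fib Y F).
  by move=> hs hYL; apply: (hY Y hs) => y /hYL /hX.
clear hX; elim: L hL hdL hY => [|A L IH] /=.
  by move=> _ _ _; apply: strong_partition0 => z [].
move=> [hA hL] [hdA hdL] hY.
apply: (@strong_partition_eq _ (fun z => fib A F z \/ fib (covers L) F z)); last first.
  by move=> z; rewrite /fib; tauto.
apply: strong_partitionU.
- by apply: (hY A hA) => y hy; left.
- by apply: IH => // Y hs hYL; apply: (hY Y hs) => y /hYL; right.
- by move=> z [hz _] [hz' _]; apply: hdA hz hz'.
Qed.

Lemma strong_partition_trisect k (Y : pt k -> Prop) (u s v : pt k -> M) :
  (forall y, Y y -> lt (u y) (s y)) -> (forall y, Y y -> lt (s y) (v y)) ->
  strong_product_cell (fib Y (fun y t => lt (u y) t /\ lt t (s y))) ->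
  strong_product_cell (fib Y (fun y t => t = s y)) ->
  strong_product_cell (fib Y (fun y t => lt (s y) t /\ lt t (v y))) ->
  strong_partition (fib Y (fun y t => lt (u y) t /\ lt t (v y))).
Proof.
move=> hus hsv hL hG hU.
apply: (@strong_partition_eq _ (fun z => fib Y (fun y t => lt (u y) t /\ lt t (s y)) z \/
  (fib Y (fun y t => t = s y) z \/ fib Y (fun y t => lt (s y) t /\ lt t (v y)) z))); last first.
  move=> z; split.
    case=> [[hy [h1 h2]]|[[hy e]|[hy [h1 h2]]]]; split=> //.
    - by split=> //; apply: lt_trans h2 (hsv _ hy).
    - by rewrite /= e; split; [apply: hus|apply: hsv].
    - by split=> //; apply: lt_trans (hus _ hy) h1.
  move=> [hy [h1 h2]]; case: (lt_total (lastc z) (s (proj z))) => [h|[h|h]].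
  - by left.
  - by right; left.
  - by right; right.
apply: strong_partitionU; first exact: strong_partition1.
  apply: strong_partitionU; try exact: strong_partition1.
  by move=> z [_ e] [_ [h _]]; rewrite e in h; apply: ltxx h.
move=> z [_ [_ h]] [[_ e]|[_ [h' _]]]; first by rewrite e in h; apply: ltxx h.
exact: lt_asym h h'.
Qed.

Section OverDecomposition.
Variables (k : nat) (Y J D : pt k -> Prop) (P : pt k -> pt k).
Hypothesis hYd : decomposition Y J D P.
Hypothesis hYc : linear_cell lt Y.

Local Notation dP y := (psub y (P y)).

Lemma leval_split (a : linmap M k) y : leval a y = lin a (P y) + leval a (dP y).
Proof. by rewrite -leval_padd padd_psub. Qed.
Lemma affine_P_proj f : affine f -> affine (fun z : pt k.+1 => f (P (proj z))).
Proof.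
move=> h; apply: (affine_comp (F := fun z : pt k.+1 => P (proj z)) h) => i.
exact: affine_proj (dec_P_affine hYd i).
Qed.
Lemma affine_dP f : affine f -> affine (fun y => f (dP y)).
Proof.
move=> h; apply: (affine_comp (F := fun y => psub y (P y)) h) => i.
exact: affineB (affine_coord i) (dec_P_affine hYd i).
Qed.
Lemma affine_dP_proj f : affine f -> affine (fun z : pt k.+1 => f (dP (proj z))).
Proof. by move=> h; apply: affine_proj (affine_dP h). Qed.
Lemma bounded_graph_D f : affine f ->
  exists N, leM 0 N /\ forall d s, D d -> s = f d -> bnd N s.
Proof.
move=> h; case: (bounded_on_affine (dec_D_bounded hYd) h) => N [hN hb].
by exists N; split=> // d s hd ->; apply: hb.
Qed.
Lemma bounded_band_D f g : affine f -> affine g ->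
  exists N, leM 0 N /\ forall d s, D d -> lt (f d) s /\ lt s (g d) -> bnd N s.
Proof.
move=> hf hg; have hDb := dec_D_bounded hYd.
case: (bounded_between (bounded_on_affine hDb hf) (bounded_on_affine hDb hg)) => N [hN hb].
by exists N; split=> // d s hd [h1 h2]; apply: hb hd (ltW h1) (ltW h2).
Qed.
Lemma J_nonempty : exists g, J g.
Proof. exact: cell_nonempty (dec_J_cell hYd). Qed.

Lemma strong_graph (a : linmap M k) :
  strong_product_cell (fib Y (fun y t => t = leval a y)).
Proof.
apply: (strong_product_lift (FJ := fun g t => t = lin a g) (FD := fun d s => s = leval a d)
          (tau := fun z => lin a (P (proj z))) hYd).
- exact: cell_graph hYc (affine_leval a).
- exact: cell_graph (dec_J_cell hYd) (affine_lin a).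
- exact: pu_graph (dec_J_pu hYd).
- exact: cell_graph (dec_D_cell hYd) (affine_leval a).
- exact: bounded_graph_D (affine_leval a).
- exact: affine_P_proj (affine_lin a).
- by move=> z [hy ht]; split=> //; split=> //; rewrite ht leval_split addrC addKr.
- by move=> g d t s hg hd -> ->; apply/fib_ext; split; [apply: (dec_padd hYd hg hd)|rewrite leval_padd].
- by left=> g t t' _ -> ->.
Qed.

Lemma strong_cyl_all : strong_product_cell (fib Y (cyl NegInf PosInf)).
Proof.
apply: (strong_product_lift (FJ := fun g t => True) (FD := fun d s => s = 0)
          (tau := fun z => lastc z) hYd).
- by apply: cell_cyl hYc _.
- exact: cell_all (dec_J_cell hYd).
- apply: pu_fib (dec_J_pu hYd) _ _; first by move=> y _; exists 0.
  move=> N hN; case: J_nonempty => g hg; exists g; split=> //.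
  by exists 0, (N + e0); split=> //; split=> //; rewrite add0r; apply: lt_add_e0.
- exact: cell_graph (dec_D_cell hYd) (affine_cst _ 0).
- by exists 0; split; [right|move=> d s _ ->; apply: bnd0; right].
- exact: affine_last.
- by move=> z [hy _]; split=> //; split=> //; rewrite subrr.
- by move=> g d t s hg hd _ ->; apply/fib_ext; split; [apply: (dec_padd hYd hg hd)|].
- by right=> d s s' _ -> ->.
Qed.

Lemma strong_cyl_above (al : linmap M k) : strong_product_cell (fib Y (cyl (Fin al) PosInf)).
Proof.
apply: (strong_product_lift (FJ := fun g t => lt (lin al g) t) (FD := fun d s => s = leval al d)
          (tau := fun z => lastc z - leval al (dP (proj z))) hYd).
- by apply: cell_cyl hYc _.
- exact: cell_above (dec_J_cell hYd) (affine_lin al).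
- apply: pu_fib (dec_J_pu hYd) _ _; first by move=> y _; exists (lin al y + e0); apply: lt_add_e0.
  move=> N hN; case: J_nonempty => g hg; exists g; split=> //.
  exists (lin al g + e0), (lin al g + e0 + N + e0); split; first exact: lt_add_e0.
  split; last exact: lt_add_e0.
  apply: lt_le_trans (lt_add_e0 _) _; rewrite -addrA; apply: leDl.
  by apply: addr_ge0 => //; left.
- exact: cell_graph (dec_D_cell hYd) (affine_leval al).
- exact: bounded_graph_D (affine_leval al).
- exact: affineB (affine_last _) (affine_dP_proj (affine_leval al)).
- move=> z [hy [/= h1 _]]; split=> //; split; last by rewrite opprB addrC subrK.
  by apply: ltBrDr; rewrite -leval_split.
- move=> g d t s hg hd ht ->; apply/fib_ext; split; first exact: (dec_padd hYd hg hd).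
  by split=> //=; rewrite leval_padd; apply: ltD2r.
- by right=> d s s' _ -> ->.
Qed.

Lemma strong_cyl_below (be : linmap M k) : strong_product_cell (fib Y (cyl NegInf (Fin be))).
Proof.
apply: (strong_product_lift (FJ := fun g t => lt t (lin be g)) (FD := fun d s => s = leval be d)
          (tau := fun z => lastc z - leval be (dP (proj z))) hYd).
- by apply: cell_cyl hYc _.
- exact: cell_below (dec_J_cell hYd) (affine_lin be).
- apply: pu_fib (dec_J_pu hYd) _ _; first by move=> y _; exists (lin be y - e0); apply: lt_sub_e0.
  move=> N hN; case: J_nonempty => g hg; exists g; split=> //.
  set t2 := lin be g - e0.
  have h1 : leM (t2 - e0 - N) (t2 - e0) by have := leDl (t2 - e0 - N) hN; rewrite subrK.
  have h2 : lt t2 (lin be g) by apply: lt_sub_e0.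
  exists (t2 - e0 - N), t2; split; first exact: le_lt_trans h1 (lt_trans (lt_sub_e0 _) h2).
  by split=> //; rewrite subrK; apply: lt_sub_e0.
- exact: cell_graph (dec_D_cell hYd) (affine_leval be).
- exact: bounded_graph_D (affine_leval be).
- exact: affineB (affine_last _) (affine_dP_proj (affine_leval be)).
- move=> z [hy [_ /= h1]]; split=> //; split; last by rewrite opprB addrC subrK.
  by apply: ltBlDr; rewrite -leval_split.
- move=> g d t s hg hd ht ->; apply/fib_ext; split; first exact: (dec_padd hYd hg hd).
  by split=> //=; rewrite leval_padd; apply: ltD2r.
- by right=> d s s' _ -> ->.
Qed.

Section Band.
Variables (al be : linmap M k).
Hypothesis hab : forall y, Y y -> lt (leval al y) (leval be y).

Let W g := lin be g - lin al g.
Let V d := leval be d - leval al d.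

Lemma affine_W : affine W.
Proof. exact: affineB (affine_lin be) (affine_lin al). Qed.
Lemma affine_V : affine V.
Proof. exact: affineB (affine_leval be) (affine_leval al). Qed.
Lemma leval_width y : leval be y = leval al y + (W (P y) + V (dP y)).
Proof.
rewrite (leval_split be) (leval_split al) /W /V addrACA.
by rewrite [lin al _ + _]addrC [leval al _ + _]addrC !subrK.
Qed.
Lemma width_pos g d : J g -> D d -> lt 0 (W g + V d).
Proof.
move=> hg hd; have := hab (dec_padd hYd hg hd); rewrite leval_width.
case: (decomposition_P hYd hg hd) => -> -> h.
by apply: (ltD2lE (z := leval al (padd g d))); rewrite addr0.
Qed.

Lemma strong_cyl_narrow : bounded_on J W -> strong_product_cell (fib Y (cyl (Fin al) (Fin be))).
Proof.
move=> hW; case: J_nonempty => g0 hg0.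
have Wc g : J g -> W g = W g0.
  by move=> hg; apply: (affine_bounded_const (dec_J_cell hYd) (dec_J_pu hYd) affine_W hW hg hg0).
have affine_top : affine (fun d => leval al d + (W g0 + V d)).
  exact: affineD (affine_leval al) (affineD (affine_cst _ (W g0)) affine_V).
apply: (strong_product_lift (FJ := fun g t => t = lin al g)
          (FD := fun d s => lt (leval al d) s /\ lt s (leval al d + (W g0 + V d)))
          (tau := fun z => lin al (P (proj z))) hYd).
- exact: (cell_cyl (a := Fin al) (b := Fin be) hYc hab).
- exact: cell_graph (dec_J_cell hYd) (affine_lin al).
- exact: pu_graph (dec_J_pu hYd).
- apply: cell_band (dec_D_cell hYd) (affine_leval al) affine_top _ => d hd.
  by apply: ltDl; apply: width_pos hg0 hd.
- exact: bounded_band_D (affine_leval al) affine_top.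
- exact: affine_P_proj (affine_lin al).
- move=> z [hy [/= h1 /= h2]]; case: (dec_split hYd hy) => hPJ _; split=> //; split=> //; split.
    by apply: ltBrDl; rewrite -leval_split.
  by apply: ltBlDl; rewrite addrA -leval_split -(Wc _ hPJ) -leval_width.
- move=> g d t s hg hd -> [h1 h2]; apply/fib_ext; split; first exact: (dec_padd hYd hg hd).
  split=> /=; first by rewrite leval_padd; apply: ltD2l.
  rewrite leval_width; case: (decomposition_P hYd hg hd) => -> ->.
  by rewrite leval_padd (Wc g hg) -addrA; apply: ltD2l.
- by left=> g t t' _ -> ->.
Qed.

(* [W] is at least the supremum [a0] of [- V], and cannot attain it: a point
   where it did would minimise [W], making [W] constant and hence bounded. *)
Lemma width_sup : ~ bounded_on J W ->
  exists a0, (forall d, D d -> leM (- V d) a0) /\ (forall g, J g -> lt a0 (W g)).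
Proof.
move=> hW; case: (bounded_on_affine (dec_D_bounded hYd) affine_V) => NV [hNV hbV].
case: (cell_has_sup (dec_D_cell hYd) (affineN affine_V)) => [|a0 [ha1 ha2]].
  by exists NV => d hd; case: (hbV d hd) => h _; have := leN2 h; rewrite opprK.
have Wge g : J g -> leM a0 (W g).
  by move=> hg; apply: ha2 => d hd; left; apply/subr_gt0; rewrite opprK; apply: width_pos.
exists a0; split=> // g hg; apply: NNPP => hn.
have e : W g = a0 := le_anti (not_lt hn) (Wge g hg).
have [g2 [hg2 hl]] : exists g2, J g2 /\ lt (W g2) (W g).
  apply: (affine_no_min (dec_J_cell hYd) affine_W hg).
  apply: NNPP => hc; apply: hW; case: (bnd_exists (W g)) => N [hN hb].
  exists N; split=> // g' hg'.
  by have -> : W g' = W g by apply: NNPP => hne; apply: hc; exists g'.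
by apply: le_lt_false (Wge g2 hg2) _; rewrite -e.
Qed.

Section Wide.
Variable a0 : M.
Hypothesis hW : ~ bounded_on J W.
Hypothesis ha0 : forall d, D d -> leM (- V d) a0.
Hypothesis hWa0 : forall g, J g -> lt a0 (W g).

Let band g t := lt (lin al g) t /\ lt t (lin al g + (W g - a0)).

Lemma band_width_pos g : J g -> lt 0 (W g - a0).
Proof. by move=> hg; apply/subr_gt0; apply: hWa0. Qed.

Lemma cell_upper_band : linear_cell lt (fib J band).
Proof.
apply: cell_band (dec_J_cell hYd) (affine_lin al) _ _.
  exact: affineD (affine_lin al) (affineB affine_W (affine_cst _ a0)).
by move=> g hg; apply: ltDl; apply: band_width_pos.
Qed.

Lemma pu_upper_band : purely_unbounded lt (fib J band).
Proof.
apply: pu_fib (dec_J_pu hYd) _ _.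
  by move=> g hg; apply: midpoint; apply: ltDl; apply: band_width_pos.
move=> N hN; case: (bnd_exists a0) => B [hB [hB1 hB2]].
have [g [hg hng]] : exists g, J g /\ ~ bnd (N + B) (W g).
  apply: NNPP => hc; apply: hW; exists (N + B); split; first exact: addr_ge0.
  by move=> g hg; apply: NNPP => hn; apply: hc; exists g.
have h1 : leM (- (N + B)) a0.
  by apply: le_trans hB1; apply: leN2; rewrite addrC; apply: leDl.
have h2 : lt (N + B) (W g).
  by apply: not_le => hle; apply: hng; split=> //; left; apply: le_lt_trans h1 (hWa0 hg).
have h3 : lt N (W g - a0).
  apply: le_lt_trans _ (ltD2r (- a0) h2); rewrite -addrA; apply: leDl.
  exact/subr_ge0.
have [|t1 [t2 [h4 [h5 [h6 [h7 h8]]]]]] :=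
  wide_interval (p := lin al g) (q := lin al g + (W g - a0)) hN.
  by rewrite addrC addKr.
by exists g; split=> //; exists t1, t2.
Qed.

Lemma strong_cyl_flat : (forall d, D d -> V d = - a0) ->
  strong_product_cell (fib Y (cyl (Fin al) (Fin be))).
Proof.
move=> hV.
apply: (strong_product_lift (FJ := band) (FD := fun d s => s = leval al d)
          (tau := fun z => lastc z - leval al (dP (proj z))) hYd).
- exact: (cell_cyl (a := Fin al) (b := Fin be) hYc hab).
- exact: cell_upper_band.
- exact: pu_upper_band.
- exact: cell_graph (dec_D_cell hYd) (affine_leval al).
- exact: bounded_graph_D (affine_leval al).
- exact: affineB (affine_last _) (affine_dP_proj (affine_leval al)).
- move=> z [hy [/= h1 /= h2]]; case: (dec_split hYd hy) => hPJ hPD.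
  split=> //; split; last by rewrite opprB addrC subrK.
  split; first by apply: ltBrDr; rewrite -leval_split.
  apply: ltBlDr; move: h2.
  by rewrite leval_width (hV _ hPD) (leval_split al) addrAC.
- move=> g d t s hg hd [h1 h2] ->; apply/fib_ext; split; first exact: (dec_padd hYd hg hd).
  split=> /=; first by rewrite leval_padd; apply: ltD2r.
  rewrite leval_width; case: (decomposition_P hYd hg hd) => -> ->.
  by rewrite leval_padd (hV _ hd) addrAC; apply: ltD2r.
- by right=> d s s' _ -> ->.
Qed.

Lemma shift_pos_or_const :
  (forall d, D d -> lt 0 (V d + a0)) \/ (forall d, D d -> V d = - a0).
Proof.
case: (classic (forall d, D d -> lt 0 (V d + a0))) => hpos; [by left|right].
have [d1 [hd1 hn]] : exists d1, D d1 /\ ~ lt 0 (V d1 + a0).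
  by apply: NNPP => hc; apply: hpos => d hd; apply: NNPP => hn; apply: hc; exists d.
have e1 : V d1 = - a0.
  have h0 : leM 0 (V d1 + a0).
    by have := proj2 (subr_ge0 _ _) (ha0 hd1); rewrite opprK addrC.
  have e0' : V d1 + a0 = 0 by apply: esym; apply: le_anti h0 (not_lt hn).
  by rewrite -[V d1](addrK a0) e0' add0r.
move=> d hd; rewrite -e1; apply: NNPP => hne.
case: (affine_no_min (dec_D_cell hYd) affine_V hd1) => [|d2 [hd2 hl]].
  by exists d; split.
by apply: (le_lt_false (ha0 hd2)); have := ltN2 hl; rewrite e1 opprK.
Qed.

Let sig y := leval al y + (V (dP y) + a0).

Lemma affine_shift : affine (fun d => V d + a0).
Proof. exact: affineD affine_V (affine_cst _ a0). Qed.
Lemma affine_sig : affine sig.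
Proof. exact: affineD (affine_leval al) (affine_dP affine_shift). Qed.
Lemma sig_split y : sig y = lin al (P y) + (leval al (dP y) + (V (dP y) + a0)).
Proof. by rewrite /sig (leval_split al) -addrA. Qed.
Lemma leval_sig y : leval be y = sig y + (W (P y) - a0).
Proof.
have shift (l w v c : M) : l + (w + v) = l + (v + c) + (w - c).
  by rewrite -addrA addrACA subrr addr0 [v + w]addrC.
by rewrite leval_width /sig; apply: shift.
Qed.
Lemma al_lt_sig : (forall d, D d -> lt 0 (V d + a0)) ->
  forall y, Y y -> lt (leval al y) (sig y).
Proof. by move=> hpos y hy; case: (dec_split hYd hy) => _ hd; apply: ltDl; apply: hpos. Qed.
Lemma sig_lt_be y : Y y -> lt (sig y) (leval be y).
Proof.
move=> hy; case: (dec_split hYd hy) => hg _.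
by rewrite leval_sig; apply: ltDl; apply: band_width_pos.
Qed.

Lemma strong_below_sig : (forall d, D d -> lt 0 (V d + a0)) ->
  strong_product_cell (fib Y (fun y t => lt (leval al y) t /\ lt t (sig y))).
Proof.
move=> hpos.
have affine_top := affineD (affine_leval al) affine_shift.
apply: (strong_product_lift (FJ := fun g t => t = lin al g)
          (FD := fun d s => lt (leval al d) s /\ lt s (leval al d + (V d + a0)))
          (tau := fun z => lin al (P (proj z))) hYd).
- exact: cell_band hYc (affine_leval al) affine_sig (al_lt_sig hpos).
- exact: cell_graph (dec_J_cell hYd) (affine_lin al).
- exact: pu_graph (dec_J_pu hYd).
- apply: cell_band (dec_D_cell hYd) (affine_leval al) affine_top _ => d hd.
  by apply: ltDl; apply: hpos.
- exact: bounded_band_D (affine_leval al) affine_top.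
- exact: affine_P_proj (affine_lin al).
- move=> z [hy [h1 h2]]; split=> //; split=> //; split.
    by apply: ltBrDl; rewrite -leval_split.
  by apply: ltBlDl; rewrite -sig_split.
- move=> g d t s hg hd -> [h1 h2]; apply/fib_ext; split; first exact: (dec_padd hYd hg hd).
  split; first by rewrite leval_padd; apply: ltD2l.
  by rewrite sig_split; case: (decomposition_P hYd hg hd) => -> ->; apply: ltD2l.
- by left=> g t t' _ -> ->.
Qed.

Lemma strong_graph_sig : strong_product_cell (fib Y (fun y t => t = sig y)).
Proof.
have affine_top := affineD (affine_leval al) affine_shift.
apply: (strong_product_lift (FJ := fun g t => t = lin al g)
          (FD := fun d s => s = leval al d + (V d + a0))
          (tau := fun z => lin al (P (proj z))) hYd).
- exact: cell_graph hYc affine_sig.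
- exact: cell_graph (dec_J_cell hYd) (affine_lin al).
- exact: pu_graph (dec_J_pu hYd).
- exact: cell_graph (dec_D_cell hYd) affine_top.
- exact: bounded_graph_D affine_top.
- exact: affine_P_proj (affine_lin al).
- by move=> z [hy h]; split=> //; split=> //; rewrite h sig_split addrC addKr.
- move=> g d t s hg hd -> ->; apply/fib_ext; split; first exact: (dec_padd hYd hg hd).
  by rewrite sig_split; case: (decomposition_P hYd hg hd) => -> ->.
- by left=> g t t' _ -> ->.
Qed.

Lemma strong_above_sig : strong_product_cell (fib Y (fun y t => lt (sig y) t /\ lt t (leval be y))).
Proof.
have affine_top := affineD (affine_leval al) affine_shift.
apply: (strong_product_lift (FJ := band) (FD := fun d s => s = leval al d + (V d + a0))
          (tau := fun z => lastc z - (leval al (dP (proj z)) + (V (dP (proj z)) + a0))) hYd).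
- exact: cell_band hYc affine_sig (affine_leval be) sig_lt_be.
- exact: cell_upper_band.
- exact: pu_upper_band.
- exact: cell_graph (dec_D_cell hYd) affine_top.
- exact: bounded_graph_D affine_top.
- exact: affineB (affine_last _) (affine_dP_proj affine_top).
- move=> z [hy [h1 h2]]; split=> //; split; last by rewrite opprB addrC subrK.
  split; first by apply: ltBrDr; rewrite -sig_split.
  by apply: ltBlDr; move: h2; rewrite leval_sig sig_split addrAC.
- move=> g d t s hg hd [h1 h2] ->; apply/fib_ext; split; first exact: (dec_padd hYd hg hd).
  split; first by rewrite sig_split; case: (decomposition_P hYd hg hd) => -> ->; apply: ltD2r.
  rewrite leval_sig sig_split; case: (decomposition_P hYd hg hd) => -> ->.
  by rewrite (addrAC (lin al g)); apply: ltD2r.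
- by right=> d s s' _ -> ->.
Qed.

Lemma strong_cyl_wide : strong_partition (fib Y (cyl (Fin al) (Fin be))).
Proof.
case: shift_pos_or_const => [hpos|hV]; last exact: strong_partition1 (strong_cyl_flat hV).
apply: strong_partition_eq (strong_partition_trisect (al_lt_sig hpos) sig_lt_be
  (strong_below_sig hpos) strong_graph_sig strong_above_sig) _.
by [].
Qed.
End Wide.

Lemma strong_cyl_finite : strong_partition (fib Y (cyl (Fin al) (Fin be))).
Proof.
case: (classic (bounded_on J W)) => hW; first exact: strong_partition1 (strong_cyl_narrow hW).
by case: (width_sup hW) => a0 [ha0 hWa0]; apply: strong_cyl_wide hW ha0 hWa0.
Qed.
End Band.

Lemma strong_cyl_partition (a b : extmap M k) :
  (forall y, Y y -> ext_lt lt (eeval a y) (eeval b y)) -> strong_partition (fib Y (cyl a b)).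
Proof.
case: (cell_nonempty hYc) => y0 hy0.
case: a => [|al|]; case: b => [|be|] hab; try by case: (hab _ hy0).
- exact: strong_partition1 (strong_cyl_below be).
- exact: strong_partition1 strong_cyl_all.
- exact: strong_cyl_finite hab.
- exact: strong_partition1 (strong_cyl_above al).
Qed.
End OverDecomposition.

Lemma strong_product_cell0 (C : pt 0 -> Prop) : (forall x, C x) -> strong_product_cell C.
Proof.
move=> hC; have hc : linear_cell lt C by apply: lc0.
split=> //; exists C, C, id; split=> //.
- by exists 0; split; [right|move=> d _ []].
- exact: affine_coord.
- by move=> g g' d d' _ _ _ _ _; split; apply: pt0_eq.
Qed.

Lemma linear_cell_strong_partition n (C : pt n -> Prop) :
  linear_cell lt C -> strong_partition C.
Proof.
elim=> {n C} [C hC|k X a C _ hX hC|k X a b C _ hX hab hC].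
- exact/strong_partition1/strong_product_cell0.
- rewrite (fib_graph_eq hC); apply: strong_partition_fib hX _ => Y [hYc [J [D [P hYd]]]] _.
  exact/strong_partition1/(strong_graph hYd hYc).
- rewrite (fib_cyl_eq hC); apply: strong_partition_fib hX _ => Y [hYc [J [D [P hYd]]]] hYX.
  by apply: (strong_cyl_partition hYd hYc) => y /hYX; apply: hab.
Qed.

Lemma covers_nth n (L : seq (pt n -> Prop)) x :
  covers L x <-> exists i, (i < size L)%N /\ nth (fun _ => False) L i x.
Proof.
elim: L => [|A L IH] /=; first by split=> // -[i []].
rewrite IH; split; first by case=> [h|[i [hi h]]]; [exists 0%N|exists i.+1].
by case=> -[|i] [hi h] /=; [left|right; exists i].
Qed.
Lemma disjoint_cells_nth n (L : seq (pt n -> Prop)) i j x :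
  disjoint_cells L -> (i < size L)%N -> (j < size L)%N ->
  nth (fun _ => False) L i x -> nth (fun _ => False) L j x -> i = j.
Proof.
elim: L i j => [|A L IH] [|i] [|j] //= [h1 h2] hi hj hx hy.
- by case: (h1 x hx); apply/covers_nth; exists j.
- by case: (h1 x hy); apply/covers_nth; exists i.
- by congr S; apply: IH hx hy.
Qed.
Lemma all_strong_nth n (L : seq (pt n -> Prop)) i :
  all_strong L -> (i < size L)%N -> strong_product_cell (nth (fun _ => False) L i).
Proof. by elim: L i => [|A L IH] [|i] //= [h1 h2] hi //; apply: IH h2 hi. Qed.

Lemma strong_partition_indexed n (C : pt n -> Prop) : strong_partition C ->
  exists (m : nat) (P : 'I_m -> pt n -> Prop),
    (forall i, product_cell lt (P i)) /\
    (forall i j, i != j -> forall x, P i x -> P j x -> False) /\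
    (forall x, C x <-> exists i, P i x).
Proof.
case=> L [hL [hdL hC]]; exists (size L), (fun i => nth (fun _ => False) L i); split.
  by move=> i; apply/strong_product_cellP/(all_strong_nth hL (ltn_ord i)).
split.
  move=> i j /eqP hij x hi hj; apply: hij; apply: val_inj.
  exact: disjoint_cells_nth hdL (ltn_ord i) (ltn_ord j) hi hj.
move=> x; rewrite hC covers_nth; split; first by case=> i [hi h]; exists (Ordinal hi).
by case=> i h; exists i; split=> //; apply: ltn_ord.
Qed.

Lemma no_positive_trivial : ~ (exists e, lt 0 e) -> forall m : M, m = 0.
Proof.
move=> hne m; case: (lt_total 0 m) => [h|[//|h]]; first by case: hne; exists m.
by case: hne; exists (- m); rewrite -oppr0; apply: ltN2.
Qed.

Section TrivialModule.
Hypothesis M0 : forall m : M, m = 0.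

Lemma pt_trivial n (x y : pt n) : x = y.
Proof. by apply: functional_extensionality => i; rewrite (M0 (x i)) (M0 (y i)). Qed.

Lemma pu_trivial n (C : pt n -> Prop) : (exists x, C x) -> purely_unbounded lt C.
Proof.
elim: n C => [|k IH] C [x hx] /=; first by move=> y; rewrite (pt_trivial y x).
left; split; first by move=> z z' _ _ _; rewrite (M0 (lastc z)) (M0 (lastc z')).
by apply: IH; exists (proj x), x; split.
Qed.

Lemma trivial_strong_partition n (C : pt n -> Prop) : linear_cell lt C -> strong_partition C.
Proof.
move=> hC; case: (classic (exists x, C x)) => [hne|hne]; last first.
  by apply: strong_partition0 => x hx; apply: hne; exists x.
apply: strong_partition1; split=> //; exists C, C, id; split=> //.
- exact: pu_trivial.
- by exists 0; split=> [|d _ i]; [right|rewrite (M0 (d i)); apply: bnd0; right].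
- exact: affine_coord.
- by move=> x hx; rewrite (pt_trivial (psub x x) x).
- by move=> g d hg _; rewrite (pt_trivial (padd g d) g).
- by move=> g g' d d' *; split; apply: pt_trivial.
Qed.
End TrivialModule.
End ProductCellPartition.

Theorem propositionA2 (R : nzRingType) (ltR : R -> R -> Prop)
    (M : lmodType R) (ltM : M -> M -> Prop) (n : nat) (C : pt M n -> Prop) :
  ordered_division_ring ltR ->
  ordered_vector_space ltR ltM ->
  linear_cell ltM C ->
  exists (m : nat) (P : 'I_m -> pt M n -> Prop),
    (forall i, product_cell ltM (P i)) /\
    (forall i j, i != j -> forall x, P i x -> P j x -> False) /\
    (forall x, C x <-> exists i, P i x).
Proof.
move=> HR HM hC; apply: strong_partition_indexed.
case: (classic (exists e, ltM 0 e)) => [[e he]|hne].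
  exact: (linear_cell_strong_partition HR HM he hC).
exact: (trivial_strong_partition HM (no_positive_trivial HM hne) hC).
Qed.
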